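(* For every $d\ge0$ there exists $\beta=\beta(d)$ such that for all integers $n\ge \max(1,d)$ and $k\ge 2$, and every $\delta\ge 1+1/\ln k$ such that $\delta k$ is an integer, if $G_n\sim G(n,d/n)$ then $$\Pr\big[s_k(G_n,\delta k)\ge \beta^k\big]\le 2^{-k}.$$
   Context: $G(n,p)$ is the random graph on $[n]$ with each edge present independently with probability $p$. For a graph $G$, $k\ge1$ and $j\ge0$, $s_k(G,j)$ is the number of unlabeled (isomorphism classes of) subgraphs of $G$ with exactly $k$ vertices and $j$ edges. *)

From HB Require Import structures.
From mathcomp Require Import all_boot all_order all_algebra.
From mathcomp Require Import all_classical all_reals all_analysis.
Set Implicit Arguments. Unset Strict Implicit. Unset Printing Implicit Defensive.
Import Order.TTheory GRing.Theory Num.Theory.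
Local Open Scope ring_scope.

(* A simple graph on [n] = 'I_n is given by its edge set, a set of
   2-element subsets of 'I_n. *)
Definition all_pairs (n : nat) : {set {set 'I_n}} :=
  [set e : {set 'I_n} | #|e| == 2%N].

(* Probability of the graph with edge set E under G(n,p) (E must be a
   subset of all_pairs n). *)
Definition gnp_weight (R : realType) (n : nat) (p : R) (E : {set {set 'I_n}}) : R :=
  p ^+ #|E| * (1 - p) ^+ (#|all_pairs n| - #|E|).

Definition gnp_prob (R : realType) (n : nat) (p : R)
    (A : {set {set 'I_n}} -> bool) : R :=
  \sum_(E in powerset (all_pairs n) | A E) gnp_weight p E.

Definition subgraphs (n : nat) (E : {set {set 'I_n}}) (k j : nat)
    : {set {set 'I_n} * {set {set 'I_n}}} :=
  [set VF : {set 'I_n} * {set {set 'I_n}} | [&& VF.2 \subset E, #|VF.1| == k, #|VF.2| == j &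
               [forall e in VF.2, e \subset VF.1]]].

Definition iso_subgraph (n : nat) (A B : {set 'I_n} * {set {set 'I_n}}) : bool :=
  [exists f : {ffun 'I_n -> 'I_n},
     [&& [forall x in A.1, forall y in A.1, (f x == f y) ==> (x == y)],
         f @: A.1 == B.1 &
         [set f @: e | e : {set 'I_n} in A.2] == B.2]].

Definition s_k (n : nat) (E : {set {set 'I_n}}) (k j : nat) : nat :=
  #|equivalence_partition (@iso_subgraph n) (subgraphs E k j)|.

From HB Require Import structures.
From mathcomp Require Import all_boot all_order all_algebra.
From mathcomp Require Import all_classical all_reals all_analysis.
From mathcomp Require Import fintype finset ring.
Import Order.TTheory GRing.Theory Num.Theory.
Local Open Scope ring_scope.

(* First moment method.  Since s_k(G, j) counts isomorphism classes of
   subgraphs, it is at most the number of labelled subgraphs with k vertices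
   and j edges, whose expectation in G(n, p) is C(n,k) C(C(k,2),j) p^j.  With
   p = d/n and j >= k, the bounds C(n,k) <= n^k/k!, C(C(k,2),j) <= (k^2/2)^j/j!
   and (k/n)^(j-k) <= 1 give at most (k^k/k!) ((kd/2)^j/j!) <= e^((1+d/2)k).
   Markov's inequality with beta = 2 e^(1+d/2) concludes.  The hypothesis on
   delta is only used through delta >= 1, i.e. j >= k. *)

Lemma sum_powerset_binomial (R : comNzRingType) (T : finType) (B : {set T}) (x y : R) :
  \sum_(A in powerset B) x ^+ #|A| * y ^+ (#|B| - #|A|) = (x + y) ^+ #|B|.
Proof.
rewrite (partition_big (fun A : {set T} => inord #|A| : 'I_(#|B|).+1) predT) //=.
rewrite addrC exprDn; apply: eq_bigr => i _.
have sizeE (A : {set T}) : (A \in powerset B) && (inord #|A| == i) =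
    (A \in [set A0 : {set T} | A0 \subset B & #|A0| == i]).
  rewrite [in RHS]inE powersetE; case sAB: (A \subset B) => //=.
  have leAB : (#|A| <= #|B|)%N by apply: subset_leq_card.
  apply/eqP/eqP => [<-|Ai]; first by rewrite inordK.
  by apply/val_inj; rewrite /= inordK // Ai.
transitivity (\sum_(A in [set A : {set T} | A \subset B & #|A| == i])
                x ^+ i * y ^+ (#|B| - i)).
  apply: eq_big => A; first exact: sizeE.
  by rewrite sizeE inE => /andP[_ /eqP ->].
by rewrite sumr_const cards_draws mulrC.
Qed.

Lemma sum_powerset_supset (R : comNzRingType) (T : finType) (B F : {set T}) (p : R) :
  F \subset B ->
  \sum_(E in powerset B | F \subset E) p ^+ #|E| * (1 - p) ^+ (#|B| - #|E|)
  = p ^+ #|F|.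
Proof.
move=> sFB; set D := powerset (B :\: F).
have disjF (E' : {set T}) : E' \subset B :\: F -> F :&: E' = set0.
  move=> sE'; apply/eqP; rewrite setI_eq0 disjoint_sym disjoints_subset.
  by apply: subset_trans sE' _; apply/subsetP => z; rewrite !inE => /andP[].
have addFK (E' : {set T}) : E' \subset B :\: F -> (F :|: E') :\: F = E'.
  move=> sE'; rewrite setDUl setDv set0U; apply/setDidPl.
  by rewrite -setI_eq0 setIC disjF.
have injF : {in D &, injective (fun E' : {set T} => F :|: E')}.
  by move=> E1 E2; rewrite !inE => s1 s2 e; rewrite -(addFK _ s1) -(addFK _ s2) e.
have supsetE : [set E in powerset B | F \subset E] = (fun E' => F :|: E') @: D.
  apply/setP => E; rewrite !inE; apply/idP/imsetP.
    case/andP => sEB sFE; exists (E :\: F); first by rewrite inE setSD.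
    by rewrite -{1}(setID E F) (setIidPr sFE).
  case=> E'; rewrite inE => sE' ->; rewrite subsetUl andbT subUset sFB /=.
  exact: subset_trans sE' (subsetDl _ _).
have cardB : #|B| = (#|F| + #|B :\: F|)%N by rewrite cardsDS // subnKC // subset_leq_card.
rewrite -big_set /= supsetE big_imset //=.
transitivity (\sum_(E' in D)
    p ^+ #|F| * (p ^+ #|E'| * (1 - p) ^+ (#|B :\: F| - #|E'|))).
  apply: eq_bigr => E'; rewrite inE => sE'.
  rewrite cardsU disjF // cards0 subn0.
  by rewrite exprD mulrA cardB subnDl.
by rewrite -big_distrr /= sum_powerset_binomial addrC subrK expr1n mulr1.
Qed.

Lemma leq_expn2r (m n e : nat) : (m <= n)%N -> (m ^ e <= n ^ e)%N.
Proof. by case: e => [|e] mn //; rewrite leq_exp2r. Qed.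

Lemma ffact_leq_expn (n m : nat) : (n ^_ m <= n ^ m)%N.
Proof.
elim: m n => [|m IHm] n //; rewrite ffactnS expnS leq_mul //.
exact: leq_trans (IHm _) (leq_expn2r _ _ _ (leq_pred n)).
Qed.

Lemma bin_fact_leq_expn (n m : nat) : ('C(n, m) * m`! <= n ^ m)%N.
Proof. by rewrite bin_ffact ffact_leq_expn. Qed.

Lemma bin2_double_leq_sqr (k : nat) : ('C(k, 2) * 2 <= k * k)%N.
Proof.
rewrite bin2 muln2 halfK; apply: leq_trans (leq_subr _ _) _.
by rewrite leq_mul // leq_pred.
Qed.

Lemma leq_expn_exchange (n k j : nat) :
  (k <= n)%N -> (k <= j)%N -> (n ^ k * k ^ j <= k ^ k * n ^ j)%N.
Proof.
move=> kn kj; rewrite -(subnKC kj) !expnD mulnCA.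
by rewrite leq_mul // leq_mul // leq_expn2r.
Qed.

Lemma subgraph_count_fact_leq (n k j : nat) : (k <= n)%N -> (k <= j)%N ->
  ('C(n, k) * k`! * ('C('C(k, 2), j) * j`! * 2 ^ j) <= k ^ k * k ^ j * n ^ j)%N.
Proof.
move=> kn kj.
apply: (@leq_trans (n ^ k * (k * k) ^ j)).
  rewrite leq_mul ?bin_fact_leq_expn //.
  apply: leq_trans (leq_mul (bin_fact_leq_expn _ _) (leqnn (2 ^ j))) _.
  by rewrite -expnMn leq_expn2r // bin2_double_leq_sqr.
by rewrite expnMn mulnA [(k ^ k * _ * _)%N]mulnAC leq_mul // leq_expn_exchange.
Qed.

Lemma expr_div_fact_le_expR (R : realType) (x : R) (m : nat) :
  0 <= x -> x ^+ m / m`!%:R <= expR x.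
Proof.
case: m => [|m] x0; last by apply: le_trans (expR_ge1Dxn m x0); rewrite lerDr.
by rewrite expr0 fact0 divr1; apply: le_trans (expR_ge1Dx x); rewrite lerDl.
Qed.

Lemma subgraph_first_moment_le (R : realType) (d : R) (n k j : nat) :
  0 <= d -> (1 <= n)%N -> (k <= j)%N ->
  ('C(n, k) * 'C('C(k, 2), j))%:R * (d / n%:R) ^+ j <= expR (1 + d / 2) ^+ k.
Proof.
move=> d0 n1 kj.
have [nk|kn] := ltnP n k.
  by rewrite bin_small // mul0n mul0r exprn_ge0 // expR_ge0.
have kfact_neq0 : (k`!%:R : R) != 0 by rewrite pnatr_eq0 -lt0n fact_gt0.
have jfact_neq0 : (j`!%:R : R) != 0 by rewrite pnatr_eq0 -lt0n fact_gt0.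
have n_neq0 : (n%:R : R) != 0 by rewrite pnatr_eq0 -lt0n.
(* Both sides carry the factor d^j / D, which reduces the claim to the
   integer inequality subgraph_count_fact_leq. *)
set D := (k`! * j`! * 2 ^ j * n ^ j)%N.
apply: (@le_trans _ _ ((k%:R ^+ k / k`!%:R) * ((k%:R * d / 2) ^+ j / j`!%:R))).
  have -> : ('C(n, k) * 'C('C(k, 2), j))%:R * (d / n%:R) ^+ j =
      ('C(n, k) * k`! * ('C('C(k, 2), j) * j`! * 2 ^ j))%:R * (d ^+ j / D%:R) :> R.
    rewrite /D !natrM !natrX !exprMn !exprVn; field.
    by rewrite kfact_neq0 jfact_neq0 !expf_neq0 // pnatr_eq0.
  have -> : (k%:R ^+ k / k`!%:R) * ((k%:R * d / 2) ^+ j / j`!%:R) =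
      (k ^ k * k ^ j * n ^ j)%:R * (d ^+ j / D%:R) :> R.
    rewrite /D !natrM !natrX !exprMn !exprVn; field.
    by rewrite kfact_neq0 jfact_neq0 !expf_neq0 // pnatr_eq0.
  by rewrite ler_wpM2r ?divr_ge0 ?exprn_ge0 // ler_nat subgraph_count_fact_leq.
apply: (@le_trans _ _ (expR k%:R * expR (k%:R * d / 2))).
  by rewrite ler_pM ?divr_ge0 ?exprn_ge0 ?mulr_ge0 //
             expr_div_fact_le_expR ?divr_ge0 ?mulr_ge0.
by rewrite -expRD -expRM_natl mulrDr mulr1 mulrA.
Qed.

Definition gnp_expect {R : realType} {n : nat} (p : R)
    (X : {set {set 'I_n}} -> R) : R :=
  \sum_(E in powerset (all_pairs n)) gnp_weight p E * X E.

Lemma subgraphs_all_pairsE (n : nat) (E : {set {set 'I_n}}) (k j : nat) :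
  E \subset all_pairs n ->
  subgraphs E k j = [set VF in subgraphs (all_pairs n) k j | VF.2 \subset E].
Proof.
move=> sE; apply/setP => -[V F]; rewrite !inE /=.
by case sFE: (F \subset E); rewrite ?andbF //= andbT (subset_trans sFE sE).
Qed.

Lemma card_subgraphs_all_pairs (n k j : nat) :
  #|subgraphs (all_pairs n) k j| = ('C(n, k) * 'C('C(k, 2), j))%N.
Proof.
pose pairs_in (V : {set 'I_n}) := [set e : {set 'I_n} | e \subset V & #|e| == 2%N].
have pairs_inE (V : {set 'I_n}) (F : {set {set 'I_n}}) :
    (F \subset all_pairs n) && [forall e in F, e \subset V] = (F \subset pairs_in V).
  apply/andP/subsetP.
    case=> /subsetP sFP /forall_inP sFV e eF.
    by rewrite inE sFV //=; have := sFP e eF; rewrite inE.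
  move=> sF; split; first by apply/subsetP => e /sF; rewrite !inE => /andP[].
  by apply/forall_inP => e /sF; rewrite inE => /andP[].
rewrite -sum1_card (eq_bigl (fun VF : {set 'I_n} * {set {set 'I_n}} =>
    (#|VF.1| == k) && ((#|VF.2| == j) && (VF.2 \subset pairs_in VF.1)))); last first.
  move=> [V F]; rewrite inE /= -pairs_inE.
  by case: (F \subset all_pairs n); rewrite /= ?andbF.
rewrite -(pair_big_dep (fun V : {set 'I_n} => #|V| == k)
   (fun V (F : {set {set 'I_n}}) => (#|F| == j) && (F \subset pairs_in V))
   (fun _ _ => 1%N)) /=.
rewrite (eq_bigr (fun _ => 'C('C(k, 2), j))); last first.
  move=> V /eqP cardV; rewrite sum1dep_card.
  rewrite (eq_finset (fun F : {set {set 'I_n}} => (F \subset pairs_in V) && (#|F| == j))).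
    by rewrite cards_draws cards_draws cardV.
  by move=> F; rewrite andbC.
by rewrite sum_nat_const -[in RHS](card_ord n) -(card_draws _ k) cardsE.
Qed.

Lemma s_k_leq_card_subgraphs (n : nat) (E : {set {set 'I_n}}) (k j : nat) :
  (s_k E k j <= #|subgraphs E k j|)%N.
Proof. by rewrite /s_k /equivalence_partition leq_imset_card. Qed.

Section GnpFirstMoment.

Variables (R : realType) (n : nat) (p : R).
Hypotheses (p_ge0 : 0 <= p) (p_le1 : p <= 1).

Lemma gnp_weight_ge0 (E : {set {set 'I_n}}) : 0 <= gnp_weight p E.
Proof. by rewrite mulr_ge0 // exprn_ge0 // subr_ge0. Qed.

Lemma gnp_markov (A : {set {set 'I_n}} -> bool) (X : {set {set 'I_n}} -> R) (b : R) :
  0 < b -> (forall E, 0 <= X E) -> (forall E, A E -> b <= X E) ->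
  gnp_prob p A <= gnp_expect p X / b.
Proof.
move=> b0 X0 AX; rewrite /gnp_prob /gnp_expect mulr_suml big_mkcondr /=.
apply: ler_sum => E _; case: ifP => AE.
  by rewrite -mulrA ler_peMr ?gnp_weight_ge0 // ler_pdivlMr // mul1r AX.
by rewrite -mulrA mulr_ge0 ?gnp_weight_ge0 ?divr_ge0 // ltW.
Qed.

Lemma gnp_prob_supset (F : {set {set 'I_n}}) :
  F \subset all_pairs n -> gnp_prob p (fun E => F \subset E) = p ^+ #|F|.
Proof. exact: sum_powerset_supset. Qed.

Lemma gnp_expect_card_subgraphs (k j : nat) :
  gnp_expect p (fun E : {set {set 'I_n}} => #|subgraphs E k j|%:R)
  = #|subgraphs (all_pairs n) k j|%:R * p ^+ j.
Proof.
set S := subgraphs (all_pairs n) k j.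
transitivity (\sum_(E in powerset (all_pairs n)) \sum_(VF in S)
                 (if VF.2 \subset E then gnp_weight p E else 0)).
  apply: eq_bigr => E; rewrite powersetE => sE.
  rewrite subgraphs_all_pairsE // -sum1_card natr_sum mulr_sumr.
  rewrite (eq_bigl (fun VF => (VF \in S) && (VF.2 \subset E))) => [|VF]; last first.
    by rewrite inE.
  by rewrite big_mkcondr /=; apply: eq_bigr => VF _; case: ifP; rewrite ?mulr1 ?mulr0.
rewrite exchange_big /= mulr_natl -sumr_const; apply: eq_bigr => VF.
rewrite inE => /and4P[sFP _ /eqP cardF _].
by rewrite -big_mkcondr -cardF; apply: gnp_prob_supset.
Qed.

End GnpFirstMoment.

Theorem mainTheorem11 (R : realType) (d : R) :
  0 <= d ->
  exists beta : R,
    forall n k j : nat,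
      (1 <= n)%N -> d <= n%:R -> (2 <= k)%N ->
      1 + (ln (k%:R : R))^-1 <= j%:R / k%:R ->
      @gnp_prob R n (d / n%:R) (fun E => beta ^+ k <= (s_k E k j)%:R)
        <= (2 : R) ^- k.
Proof.
move=> d0; exists (2 * expR (1 + d / 2)) => n k j n1 dn k2 hj.
have k0 : (0 : R) < k%:R by rewrite ltr0n (leq_trans _ k2).
have kj : (k <= j)%N.
  have ln_inv_gt0 : 0 < (ln (k%:R : R))^-1 by rewrite invr_gt0 ln_gt0 // ltr1n.
  have : 1 < j%:R / (k%:R : R) by apply: lt_le_trans hj; rewrite ltrDl.
  by rewrite ltr_pdivlMr // mul1r ltr_nat => /ltnW.
have n0 : (0 : R) < n%:R by rewrite ltr0n.
have p0 : 0 <= d / n%:R by rewrite divr_ge0 // ltW.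
have p1 : d / n%:R <= 1 by rewrite ler_pdivrMr // mul1r.
have beta_gt0 : 0 < (2 * expR (1 + d / 2)) ^+ k.
  by rewrite exprn_gt0 // mulr_gt0 // expR_gt0.
apply: le_trans (@gnp_markov R n _ p0 p1 _
  (fun E => #|subgraphs E k j|%:R) _ beta_gt0 _ _) _.
- by move=> E; rewrite ler0n.
- by move=> E /le_trans; apply; rewrite ler_nat s_k_leq_card_subgraphs.
rewrite gnp_expect_card_subgraphs card_subgraphs_all_pairs ler_pdivrMr //.
rewrite [(2 * _) ^+ k]exprMn mulKf ?expf_neq0 //.
exact: subgraph_first_moment_le.
Qed.
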